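(* Every simple probabilistic automaton is leaktight.
   Context: Fix a finite alphabet $A$. A probabilistic automaton is $\mathcal{A}=(Q,q_0,\Delta,F)$ with $Q$ finite, $\Delta:Q\times A\to\mathcal{D}(Q)$. For $a\in A$ let $M_a(s,t)=\Delta(s,a)(t)$, for $u=a_0\cdots a_{n-1}$ let $M_u=M_{a_0}\cdots M_{a_{n-1}}$ (identity for the empty word), and $\mathbb{P}_{\mathcal{A}}(s\xrightarrow{u}t)=M_u(s,t)$, $\mathbb{P}_{\mathcal{A}}(s\xrightarrow{u}T)=\sum_{t\in T}\mathbb{P}_{\mathcal{A}}(s\xrightarrow{u}t)$. For an infinite word $w\in A^\omega$, $w_{<k}$ denotes its prefix of length $k$. For $w\in A^\omega$ and $p\in Q$, the process induced by $w$ from $p$ is simple if there exist $\lambda>0$ and sequences $(A_k)_{k\in\mathbb{N}},(B_k)_{k\in\mathbb{N}}$ of subsets of $Q$ such that: for all $k$, $A_k\cap B_k=\emptyset$ and $A_k\cup B_k=Q$; for all $k$ and all $q\in A_k$, $\mathbb{P}_{\mathcal{A}}(p\xrightarrow{w_{<k}}q)\ge\lambda$; and $\lim_{n\to\infty}\mathbb{P}_{\mathcal{A}}(p\xrightarrow{w_{<n}}B_n)=0$. $\mathcal{A}$ is simple if for every $w\in A^\omega$ and every $p\in Q$ the process induced by $w$ from $p$ is simple. A nonnegative $Q\times Q$ matrix $M$ is idempotent if $M(s,t)>0\iff M^2(s,t)>0$ for all $s,t$; a finite word $u$ is idempotent if $M_u$ is. A leak is a sequence $(u_n)$ of idempotent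 words such that $M_{u_n}$ converges to an idempotent matrix $M$ and there exist states $r,q$, both recurrent in the Markov chain with transition matrix $M$, with $\lim_n\mathbb{P}_{\mathcal{A}}(r\xrightarrow{u_n}q)=0$ and $\mathbb{P}_{\mathcal{A}}(r\xrightarrow{u_n}q)>0$ for all $n$. $\mathcal{A}$ is leaktight if it has no leak. *)

From HB Require Import structures.
From mathcomp Require Import all_boot all_order all_algebra.
From mathcomp Require Import all_classical all_reals topology normedtype sequences.
Set Implicit Arguments. Unset Strict Implicit. Unset Printing Implicit Defensive.
Import Order.TTheory GRing.Theory Num.Theory.
Import numFieldNormedType.Exports.
Local Open Scope classical_set_scope.
Local Open Scope ring_scope.

Definition qmx (Q : finType) (R : realType) := Q -> Q -> R.

Definition qmx_mul (Q : finType) (R : realType) (M N : qmx Q R) : qmx Q R :=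
  fun s t => \sum_(r : Q) M s r * N r t.

Definition qmx_id (Q : finType) (R : realType) : qmx Q R :=
  fun s t => (s == t)%:R.

Record pa (A Q : finType) (R : realType) := PA {
  pa_q0 : Q;
  pa_Delta : Q -> A -> Q -> R;
  pa_F : {set Q};
  pa_Delta_ge0 : forall q a t, 0 <= pa_Delta q a t;
  pa_Delta_sum1 : forall q a, \sum_(t : Q) pa_Delta q a t = 1 }.

Section Auto.
Variables (A Q : finType) (R : realType) (aut : pa A Q R).

Definition Ma (a : A) : qmx Q R := fun s t => pa_Delta aut s a t.

Definition Mw (u : seq A) : qmx Q R :=
  foldr (fun a acc => qmx_mul (Ma a) acc) (@qmx_id Q R) u.

Definition Pr (s : Q) (u : seq A) (t : Q) : R := Mw u s t.
Definition PrSet (s : Q) (u : seq A) (T : {set Q}) : R := \sum_(t in T) Pr s u t.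

Definition prefix (w : nat -> A) (k : nat) : seq A := mkseq w k.

Definition simple_process (w : nat -> A) (p : Q) : Prop :=
  exists lambda : R, 0 < lambda /\
  exists (As Bs : nat -> {set Q}),
    (forall k, As k :&: Bs k = finset.set0 /\ As k :|: Bs k = [set: Q]%SET) /\
    (forall k q, q \in As k -> lambda <= Pr p (prefix w k) q) /\
    (fun n => PrSet p (prefix w n) (Bs n)) @ \oo --> (0 : R).

Definition simple_pa : Prop := forall (w : nat -> A) (p : Q), simple_process w p.

Definition idempotent_mx (M : qmx Q R) : Prop :=
  forall s t, (0 < M s t) = (0 < qmx_mul M M s t).
Definition idempotent_word (u : seq A) : Prop := idempotent_mx (Mw u).

Definition mx_edge (M : qmx Q R) : rel Q := fun s t => 0 < M s t.
Definition recurrent (M : qmx Q R) (r : Q) : Prop :=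
  forall t, connect (mx_edge M) r t -> connect (mx_edge M) t r.

Definition leak (u : nat -> seq A) : Prop :=
  (forall n, idempotent_word (u n)) /\
  exists M : qmx Q R,
    (forall s t, (fun n => Mw (u n) s t) @ \oo --> M s t) /\
    idempotent_mx M /\
    exists r q, recurrent M r /\ recurrent M q /\
      (fun n => Pr r (u n) q) @ \oo --> (0 : R) /\
      (forall n, 0 < Pr r (u n) q).

Definition leaktight : Prop := forall u : nat -> seq A, ~ leak u.

End Auto.

From Pilot Require Import Defs.
From HB Require Import structures.
From mathcomp Require Import all_boot all_order all_algebra.
From mathcomp Require Import all_classical all_reals topology normedtype sequences.
From mathcomp Require Import ring lra.
Set Implicit Arguments. Unset Strict Implicit. Unset Printing Implicit Defensive.
Import Order.TTheory GRing.Theory Num.Theory.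
Import numFieldNormedType.Exports.
Local Open Scope classical_set_scope.
Local Open Scope ring_scope.

(* Concatenate
   blocks [u (f j)] whose matrices approach [M] geometrically fast and start
   from [r].  Each block leaves the recurrence class of [r] almost closed and
   lets a fixed fraction of the mass on the transient states [Mid] escape, so
   [r] keeps a probability bounded below.  Inside block [j], the mass on the
   states [Lo] from which [M] cannot enter the class [Dq] of [q] can reach [Dq]
   by the end of the block with positive probability from [r], but only with a
   tiny total probability.  Each letter shrinks this still-live mass by at most
   the least transition probability, so at some prefix some state carries a
   probability that is neither vanishingly small nor at least the bound
   [lambda] of a simple process. *)

Section FinSums.
Variables (R : realType) (I : finType).
Implicit Types (P : pred I) (F : I -> R).

Lemma ler_term_sum P F j :
  (forall i, P i -> 0 <= F i) -> P j -> F j <= \sum_(i | P i) F i.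
Proof.
move=> F0 Pj; rewrite (bigD1 j) //= lerDl.
by apply: sumr_ge0 => i /andP [Pi _]; apply: F0.
Qed.

Lemma sumr_gt0_exists F : 0 < \sum_i F i -> exists i, 0 < F i.
Proof.
move=> sum_gt0; apply/not_existsP => F_le0.
have : \sum_i F i <= 0 by apply: sumr_le0 => i _; rewrite leNgt; apply/negP/F_le0.
by rewrite leNgt sum_gt0.
Qed.

Lemma exists_ge_average (i0 : I) F : exists i, \sum_j F j <= #|I|%:R * F i.
Proof.
apply/not_existsP => below; have lt_avg i : #|I|%:R * F i < \sum_j F j.
  by rewrite ltNge; apply/negP/below.
have : \sum_(i : I) #|I|%:R * F i < \sum_(i : I) \sum_j F j.
  by apply: ltr_sum => //; apply/hasP; exists i0 => //; apply: mem_index_enum.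
by rewrite -mulr_sumr sumr_const mulr_natl ltxx.
Qed.

Lemma sumr_le_card P F e :
  0 <= e -> (forall i, P i -> F i <= e / #|I|%:R) -> \sum_(i | P i) F i <= e.
Proof.
move=> e0 F_le; apply: le_trans (ler_sum _ F_le) _.
rewrite sumr_const -[_ *+ #|P|]mulr_natr.
have [I0|I_gt0] := posnP #|I|.
  have -> : #|P| = 0%N by apply/eqP; rewrite -leqn0 -I0 max_card.
  by rewrite mulr0.
rewrite -[leRHS](@divfK _ #|I|%:R) ?pnatr_eq0 -?lt0n //.
by apply: ler_wpM2l; [rewrite divr_ge0 | rewrite ler_nat max_card].
Qed.

Lemma sumr_mul_indicator (S : {set I}) F :
  \sum_i F i * (i \in S)%:R = \sum_(i in S) F i.
Proof.
by rewrite [RHS]big_mkcond; apply: eq_bigr => i _; case: (i \in S); rewrite ?mulr1 ?mulr0.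
Qed.

Lemma bigmin_gt0 P F : (forall i, P i -> 0 < F i) ->
  0 < \big[Num.min/1]_(i | P i) F i.
Proof. by move=> F_gt0; apply: lt_bigmin. Qed.

End FinSums.

Section StochasticWords.
Variables (A Q : finType) (R : realType) (aut : pa A Q R).
Notation Mw := (Mw aut).
Notation Del := (pa_Delta aut).

Lemma Mw_nil s t : Mw [::] s t = (s == t)%:R.
Proof. by []. Qed.

Lemma Mw_cons a u s t : Mw (a :: u) s t = \sum_r Del s a r * Mw u r t.
Proof. by []. Qed.

Lemma sum_Mw_nil (F : Q -> R) s : \sum_r Mw [::] s r * F r = F s.
Proof.
rewrite (bigD1 s) //= /qmx_id eqxx mul1r big1 ?addr0 // => r.
by rewrite eq_sym => /negbTE ->; rewrite mul0r.
Qed.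

Lemma sum_Mw_nilr (F : Q -> R) t : \sum_r F r * Mw [::] r t = F t.
Proof.
rewrite (bigD1 t) //= /qmx_id eqxx mulr1 big1 ?addr0 // => r.
by move=> /negbTE ->; rewrite mulr0.
Qed.

Lemma sum_Mw_nil_set s (S : {set Q}) : \sum_(t in S) Mw [::] s t = (s \in S)%:R.
Proof. by rewrite -sumr_mul_indicator sum_Mw_nil. Qed.

Lemma Mw_ge0 u s t : 0 <= Mw u s t.
Proof.
elim: u s t => [|a u IHu] s t; first by rewrite Mw_nil ler0n.
by rewrite Mw_cons; apply: sumr_ge0 => r _; rewrite mulr_ge0 ?pa_Delta_ge0.
Qed.

Lemma Mw_sum1 u s : \sum_t Mw u s t = 1.
Proof.
elim: u s => [|a u IHu] s.
  by rewrite -[RHS](sum_Mw_nil (fun=> 1) s); apply: eq_bigr => t _; rewrite mulr1.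
under eq_bigr do rewrite Mw_cons.
rewrite exchange_big /=; under eq_bigr do rewrite -mulr_sumr IHu mulr1.
exact: pa_Delta_sum1.
Qed.

Lemma Mw_sum_predC u s (P : pred Q) :
  \sum_(t | P t) Mw u s t = 1 - \sum_(t | ~~ P t) Mw u s t.
Proof. by rewrite -(Mw_sum1 u s) [in RHS](bigID P) /= addrK. Qed.

Lemma Mw_sum_le1 u s (P : pred Q) : \sum_(t | P t) Mw u s t <= 1.
Proof.
by rewrite Mw_sum_predC gerBl; apply: sumr_ge0 => t _; apply: Mw_ge0.
Qed.

Lemma Mw_cat u v s t : Mw (u ++ v) s t = \sum_r Mw u s r * Mw v r t.
Proof.
elim: u s => [|a u IHu] s; first by rewrite sum_Mw_nil.
rewrite cat_cons Mw_cons; under eq_bigr do rewrite IHu mulr_sumr.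
rewrite exchange_big /=; apply: eq_bigr => r _.
by rewrite /qmx_mul /Ma mulr_suml; apply: eq_bigr => i _; rewrite mulrA.
Qed.

Lemma Mw_seq1 a s t : Mw [:: a] s t = Del s a t.
Proof. by rewrite Mw_cons sum_Mw_nilr. Qed.

Definition vMw (x : Q -> R) (u : seq A) t := \sum_s x s * Mw u s t.

Lemma vMw_nil x t : vMw x [::] t = x t.
Proof. exact: sum_Mw_nilr. Qed.

Lemma vMw_cat x u v t : vMw x (u ++ v) t = vMw (vMw x u) v t.
Proof.
rewrite /vMw; under eq_bigr do rewrite Mw_cat mulr_sumr.
rewrite exchange_big /=; apply: eq_bigr => r _.
by rewrite mulr_suml; apply: eq_bigr => i _; rewrite mulrA.
Qed.

Lemma vMw_ge0 x u t : (forall s, 0 <= x s) -> 0 <= vMw x u t.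
Proof. by move=> x0; apply: sumr_ge0 => s _; rewrite mulr_ge0 ?Mw_ge0. Qed.

Lemma sum_vMw x u : \sum_t vMw x u t = \sum_s x s.
Proof.
rewrite exchange_big /=; apply: eq_bigr => s _.
by rewrite -mulr_sumr Mw_sum1 mulr1.
Qed.

Lemma sum_vMw_pred x u (P : pred Q) :
  \sum_(t | P t) vMw x u t = \sum_s x s * \sum_(t | P t) Mw u s t.
Proof.
by rewrite exchange_big /=; apply: eq_bigr => s _; rewrite mulr_sumr.
Qed.

Lemma vMwD x y u t : vMw (fun s => x s + y s) u t = vMw x u t + vMw y u t.
Proof. by rewrite /vMw -big_split /=; apply: eq_bigr => s _; rewrite mulrDl. Qed.

Definition min_trans :=
  \big[Num.min/1]_(p : Q * A * Q | 0 < Del p.1.1 p.1.2 p.2) Del p.1.1 p.1.2 p.2.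

Lemma min_trans_gt0 : 0 < min_trans.
Proof. exact: bigmin_gt0. Qed.

Lemma min_trans_le1 : min_trans <= 1.
Proof. exact: bigmin_le_id. Qed.

Lemma min_trans_le s a t : 0 < Del s a t -> min_trans <= Del s a t.
Proof.
exact: (bigmin_le_cond _ (fun p : Q * A * Q => Del p.1.1 p.1.2 p.2) (j := (s, a, t))).
Qed.

End StochasticWords.

Section ConcatWord.
Variables (T : Type) (x0 : T) (v : nat -> seq T).

Definition concat_prefix J := flatten [seq v j | j <- iota 0 J].

(* Letter [k] is read off the first [k.+1] blocks. *)
Definition concat_word k := nth x0 (concat_prefix k.+1) k.

Lemma concat_prefixD J K :
  concat_prefix (J + K) = concat_prefix J ++ flatten [seq v j | j <- iota J K].
Proof. by rewrite /concat_prefix iotaD map_cat flatten_cat. Qed.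

Lemma concat_prefixS J : concat_prefix J.+1 = concat_prefix J ++ v J.
Proof. by rewrite -addn1 concat_prefixD /= cats0. Qed.

Hypothesis v_neq0 : forall j, (0 < size (v j))%N.

Lemma size_concat_prefix J : (J <= size (concat_prefix J))%N.
Proof. by elim: J => // J IHJ; rewrite concat_prefixS size_cat -addn1 leq_add. Qed.

Lemma nth_concat_word J k : (k < size (concat_prefix J))%N ->
  concat_word k = nth x0 (concat_prefix J) k.
Proof.
move=> k_lt; rewrite /concat_word; case: (leqP k.+1 J) => [kJ|Jk].
  by rewrite -(subnKC kJ) concat_prefixD nth_cat size_concat_prefix.
by rewrite -(subnKC (ltnW Jk)) concat_prefixD nth_cat k_lt.
Qed.

Lemma mkseq_concat_word J n : (n <= size (concat_prefix J))%N ->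
  mkseq concat_word n = take n (concat_prefix J).
Proof.
move=> n_le; apply: (@eq_from_nth _ x0); first by rewrite size_mkseq size_takel.
move=> k; rewrite size_mkseq => k_lt.
by rewrite nth_mkseq // nth_take // (nth_concat_word (leq_trans k_lt n_le)).
Qed.

Lemma mkseq_concat_word_block j i : (i <= size (v j))%N ->
  mkseq concat_word (size (concat_prefix j) + i) = concat_prefix j ++ take i (v j).
Proof.
move=> i_le; rewrite (@mkseq_concat_word j.+1) concat_prefixS ?size_cat ?leq_add2l //.
by rewrite take_cat ltnNge leq_addr /= addKn.
Qed.

End ConcatWord.

Lemma simple_process_dichotomy (A Q : finType) (R : realType) (aut : pa A Q R) w p :
  simple_process aut w p -> exists2 lam : R, 0 < lam &
    forall kappa, 0 < kappa -> exists N, forall n s, (N <= n)%N ->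
      lam <= Pr aut p (Defs.prefix w n) s \/ Pr aut p (Defs.prefix w n) s < kappa.
Proof.
move=> [lam [lam_gt0 [As [Bs [AB_part [A_ge B_cvg0]]]]]].
exists lam => // kappa kappa_gt0.
have [N _ B_small] := cvgr_lt _ B_cvg0 _ kappa_gt0; exists N => n s n_ge.
have [s_in|s_nin] := boolP (s \in As n); first by left; apply: A_ge.
right; apply: le_lt_trans (B_small n n_ge); rewrite /PrSet.
have s_in : s \in Bs n.
  by move: (finset.in_setT s); rewrite -(AB_part n).2 finset.in_setU (negbTE s_nin).
by apply: (ler_term_sum _ s_in) => t _; apply: Mw_ge0.
Qed.

Lemma first_crossing (R : realDomainType) (L : nat -> R) (m theta : R) n :
  0 < m -> (forall i, (i < n)%N -> m * L i <= L i.+1) ->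
  theta < L 0%N -> L n <= theta ->
  exists2 i, (i <= n)%N & m * theta < L i <= theta.
Proof.
move=> m_gt0 L_step L0_gt Ln_le.
have ex_le : exists i, (i <= n)%N && (L i <= theta) by exists n; rewrite leqnn.
case: (ex_minnP ex_le) => i /andP [i_le_n Li_le] i_min.
exists i => //; rewrite Li_le andbT.
case: i i_le_n Li_le i_min => [|k] k_lt Lk1_le k_min.
  by move: Lk1_le; rewrite leNgt L0_gt.
have Lk_gt : theta < L k.
  rewrite ltNge; apply/negP => Lk_le.
  by have := k_min k; rewrite (ltnW k_lt) Lk_le => /(_ isT); rewrite ltnn.
by apply: lt_le_trans (L_step k k_lt); rewrite ltr_pM2l.
Qed.

Section Reach.
Variables (A Q : finType) (R : realType) (aut : pa A Q R) (D : {set Q}).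
Notation Mw := (Mw aut).
Notation Del := (pa_Delta aut).
Notation vMw := (vMw aut).

Definition reach (v : seq A) i s := \sum_(d in D) Mw (drop i v) s d.

Lemma reach_ge0 v i s : 0 <= reach v i s.
Proof. by apply: sumr_ge0 => d _; apply: Mw_ge0. Qed.

Lemma reach_le1 v i s : reach v i s <= 1.
Proof. exact: Mw_sum_le1. Qed.

Lemma reach_step (a0 : A) v i s : (i < size v)%N ->
  reach v i s = \sum_t Del s (nth a0 v i) t * reach v i.+1 t.
Proof.
move=> i_lt; rewrite /reach (drop_nth a0 i_lt).
under eq_bigr do rewrite Mw_cons.
by rewrite exchange_big /=; apply: eq_bigr => t _; rewrite mulr_sumr.
Qed.

Lemma reach_size v s : reach v (size v) s = (s \in D)%:R.
Proof. by rewrite /reach drop_size sum_Mw_nil_set. Qed.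

Lemma vMw_take_step (a0 : A) x v i t : (i < size v)%N ->
  vMw x (take i.+1 v) t = \sum_s vMw x (take i v) s * Del s (nth a0 v i) t.
Proof.
move=> i_lt; rewrite (take_nth a0 i_lt) -cats1 vMw_cat {1}/vMw.
by apply: eq_bigr => s _; rewrite Mw_seq1.
Qed.

Lemma sum_vMw_reach x v i :
  \sum_s vMw x (take i v) s * reach v i s = \sum_t x t * reach v 0 t.
Proof.
under eq_bigr do rewrite mulr_suml.
rewrite exchange_big /=; apply: eq_bigr => t _.
under eq_bigr do rewrite -mulrA.
rewrite -mulr_sumr /reach drop0; congr (_ * _).
under eq_bigr do rewrite mulr_sumr.
rewrite exchange_big /=; apply: eq_bigr => d _.
by rewrite -Mw_cat cat_take_drop.
Qed.

Definition live_mass x v i := \sum_s vMw x (take i v) s * (0 < reach v i s)%R%:R.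

Lemma live_mass0 x v : live_mass x v 0 = \sum_t x t * (0 < reach v 0 t)%R%:R.
Proof. by apply: eq_bigr => t _; rewrite take0 vMw_nil. Qed.

Lemma live_mass_size x v : live_mass x v (size v) = \sum_t x t * reach v 0 t.
Proof.
rewrite -(sum_vMw_reach x v (size v)); apply: eq_bigr => s _.
by rewrite reach_size; case: (s \in D); rewrite ?ltr01 ?ltxx.
Qed.

Variable m : R.
Hypothesis m_le_Delta : forall s a t, 0 < Del s a t -> m <= Del s a t.

(* A live state has a live successor, reached with probability at least [m]. *)
Lemma live_mass_step x v i : (forall s, 0 <= x s) -> (i < size v)%N ->
  m * live_mass x v i <= live_mass x v i.+1.
Proof.
move=> x_ge0 i_lt; have [a0 _] : exists a0 : A, True by case: v i_lt => // a; exists a.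
rewrite /live_mass; under [leRHS]eq_bigr do rewrite (vMw_take_step a0 _ _ i_lt) mulr_suml.
rewrite exchange_big /= mulr_sumr; apply: ler_sum => s _.
under [leRHS]eq_bigr do rewrite -mulrA.
rewrite -mulr_sumr mulrCA; apply: ler_wpM2l; first exact: vMw_ge0.
have live_ge0 t : 0 <= Del s (nth a0 v i) t * (0 < reach v i.+1 t)%R%:R.
  by rewrite mulr_ge0 ?pa_Delta_ge0.
case: ltP => [|_]; last by rewrite mulr0; apply: sumr_ge0.
rewrite mulr1 (reach_step a0 s i_lt) => /sumr_gt0_exists [t].
rewrite mulr_ge0_gt0 ?pa_Delta_ge0 ?reach_ge0 // => /andP [Del_gt0 reach_gt0].
apply: le_trans (ler_term_sum (fun t _ => live_ge0 t) (isT : xpredT t)).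
by rewrite reach_gt0 mulr1 m_le_Delta.
Qed.

Lemma sum_vMw_miss x v i :
  \sum_s vMw x (take i v) s * (1 - reach v i s) = \sum_t x t * (1 - reach v 0 t).
Proof.
under eq_bigr do rewrite mulrBr mulr1.
under [RHS]eq_bigr do rewrite mulrBr mulr1.
by rewrite !sumrB sum_vMw_reach sum_vMw.
Qed.

(* The live part of [lo] starts above [theta] and ends below it, so it crosses
   the window between [m * theta] and [theta]; by averaging, some state then
   carries a fraction [1 / #|Q|] of it. *)
Lemma exists_live_state (lo : Q -> R) v theta :
  0 < m -> (forall t, 0 <= lo t) -> 0 < theta ->
  theta < \sum_t lo t * (0 < reach v 0 t)%R%:R -> \sum_t lo t * reach v 0 t <= theta ->
  exists i s, [/\ (i <= size v)%N, 0 < reach v i s &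
    m * theta / #|Q|%:R < vMw lo (take i v) s <= theta].
Proof.
move=> m_gt0 lo_ge0 theta_gt0 start_gt end_le.
have [t0 _] := sumr_gt0_exists (lt_trans theta_gt0 start_gt).
have N_gt0 : 0 < #|Q|%:R :> R by rewrite ltr0n; apply/card_gt0P; exists t0.
have [i i_le /andP [live_gt live_le]] :
    exists2 i, (i <= size v)%N & m * theta < live_mass lo v i <= theta.
  apply: first_crossing => //; first by move=> i; apply: live_mass_step.
    by rewrite live_mass0.
  by rewrite live_mass_size.
pose live s := vMw lo (take i v) s * (0 < reach v i s)%R%:R.
have live_ge0 s : 0 <= live s by rewrite mulr_ge0 ?vMw_ge0.
have [s s_avg] := exists_ge_average t0 live.
have live_s_gt : m * theta / #|Q|%:R < live s.
  by rewrite ltr_pdivrMr // [live s * _]mulrC; apply: lt_le_trans s_avg.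
have reach_gt0 : 0 < reach v i s.
  apply: contraPT live_s_gt => /negbTE reach_le0; apply/negP.
  by rewrite /live reach_le0 mulr0 -leNgt divr_ge0 ?ltW ?mulr_gt0.
exists i, s; split => //; rewrite /live reach_gt0 mulr1 in live_s_gt.
rewrite live_s_gt; apply: le_trans live_le.
apply: le_trans (ler_term_sum (fun s _ => live_ge0 s) (isT : xpredT s)).
by rewrite /live reach_gt0 mulr1.
Qed.

(* The state found above has [reach < 1 / 2], since almost none of [lo]
   reaches [D]; so the mass that [hi] puts on it is at most twice the mass of
   [hi] that misses [D]. *)
Lemma exists_intermediate_vMw (lo hi mid : Q -> R) v theta :
  0 < m -> m <= 1 ->
  (forall t, 0 <= lo t) -> (forall t, 0 <= hi t) -> (forall t, 0 <= mid t) ->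
  0 < theta -> theta < \sum_t lo t * (0 < reach v 0 t)%R%:R ->
  \sum_t lo t * reach v 0 t <= m * theta / #|Q|%:R / 2 ->
  exists i s, (i <= size v)%N /\
    m * theta / #|Q|%:R < vMw (fun t => lo t + hi t + mid t) (take i v) s <=
      theta + 2 * \sum_t hi t * (1 - reach v 0 t) + \sum_t mid t.
Proof.
move=> m_gt0 m_le1 lo_ge0 hi_ge0 mid_ge0 theta_gt0 start_gt end_le.
have [t0 _] := sumr_gt0_exists (lt_trans theta_gt0 start_gt).
have N_ge1 : 1 <= #|Q|%:R :> R by rewrite ler1n; apply/card_gt0P; exists t0.
set c := m * theta / #|Q|%:R in end_le *.
have c_gt0 : 0 < c by rewrite divr_gt0 ?mulr_gt0 // (lt_le_trans ltr01).
have c_le : c <= theta by rewrite /c ler_pdivrMr ?(lt_le_trans ltr01) //; nra.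
have end_le_theta : \sum_t lo t * reach v 0 t <= theta by apply: le_trans end_le _; lra.
have [i [s [i_le reach_gt0 /andP [lo_gt lo_le]]]] :=
  exists_live_state m_gt0 lo_ge0 theta_gt0 start_gt end_le_theta.
rewrite -/c in lo_gt.
have reach_mass_le : vMw lo (take i v) s * reach v i s <= c / 2.
  rewrite -(sum_vMw_reach lo v i) in end_le; apply: le_trans end_le.
  by apply: (ler_term_sum (P := xpredT)) => // t _; rewrite mulr_ge0 ?vMw_ge0 ?reach_ge0.
have hi_le : vMw hi (take i v) s * (1 - reach v i s) <= \sum_t hi t * (1 - reach v 0 t).
  rewrite -(sum_vMw_miss hi v i); apply: (ler_term_sum (P := xpredT)) => // t _.
  by rewrite mulr_ge0 ?vMw_ge0 // subr_ge0 reach_le1.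
have mid_le : vMw mid (take i v) s <= \sum_t mid t.
  rewrite -(sum_vMw aut mid (take i v)).
  by apply: (ler_term_sum (P := xpredT)) => // t _; apply: vMw_ge0.
have hi_ge0' := vMw_ge0 aut (take i v) s hi_ge0.
have mid_ge0' := vMw_ge0 aut (take i v) s mid_ge0.
exists i, s; split => //; rewrite !vMwD; apply/andP; split; first lra.
nra.
Qed.
End Reach.

Section LimitMatrix.
Variables (A Q : finType) (R : realType) (aut : pa A Q R).
Variables (u : nat -> seq A) (M : qmx Q R).
Hypothesis Mw_cvg : forall s t, (fun n => Mw aut (u n) s t) @ \oo --> M s t.

Lemma limit_ge0 s t : 0 <= M s t.
Proof.
rewrite leNgt; apply/negP => M_lt0.
have [n Mw_lt0] := filter_ex (cvgr_lt _ (@Mw_cvg s t) _ M_lt0).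
by move: (Mw_ge0 aut (u n) s t); rewrite leNgt Mw_lt0.
Qed.

Lemma limit_sum1 s : \sum_t M s t = 1.
Proof.
have sum_cvg : (fun n => \sum_t Mw aut (u n) s t) @ \oo --> \sum_t M s t.
  by apply: cvg_big => [|t _]; [exact: add_continuous | exact: Mw_cvg].
apply: (cvg_unique _ sum_cvg) => //=.
under eq_cvg do rewrite Mw_sum1.
exact: cvg_cst.
Qed.

End LimitMatrix.

Section StochasticIdempotent.
Variables (Q : finType) (R : realType) (M : qmx Q R).
Hypotheses (M_ge0 : forall s t, 0 <= M s t) (M_sum1 : forall s, \sum_t M s t = 1).
Hypothesis M_idem : idempotent_mx M.

Lemma mx_edge_trans x y z : 0 < M x y -> 0 < M y z -> 0 < M x z.
Proof.
move=> Mxy Myz; rewrite M_idem; apply: lt_le_trans (mulr_gt0 Mxy Myz) _.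
by apply: (ler_term_sum (P := xpredT)) => // w _; apply: mulr_ge0.
Qed.

Lemma connect_mx_edge x y : connect (mx_edge M) x y -> x = y \/ 0 < M x y.
Proof.
case/connectP => p; elim: p x => [|z p IHp] x /=; first by left.
case/andP => Mxz /IHp IHz /IHz [<-|Mzy]; right => //.
exact: mx_edge_trans Mxz Mzy.
Qed.

Lemma recurrent_diag_gt0 x : recurrent M x -> 0 < M x x.
Proof.
move=> x_rec; have [t Mxt] : exists t, 0 < M x t.
  by apply: sumr_gt0_exists; rewrite M_sum1 ltr01.
case: (connect_mx_edge (x_rec t (connect1 Mxt))) => [tx|Mtx]; first by rewrite -{2}tx.
exact: mx_edge_trans Mxt Mtx.
Qed.

End StochasticIdempotent.

Section LeakLimit.
Variables (A Q : finType) (R : realType) (aut : pa A Q R).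
Variables (u : nat -> seq A) (M : qmx Q R) (r q : Q).
Hypothesis Mw_cvg : forall s t, (fun n => Mw aut (u n) s t) @ \oo --> M s t.
Hypothesis M_idem : idempotent_mx M.
Hypotheses (r_rec : recurrent M r) (q_rec : recurrent M q).
Hypothesis Pr_rq_cvg0 : (fun n => Pr aut r (u n) q) @ \oo --> (0 : R).

Let M_ge0 := limit_ge0 Mw_cvg.
Let M_trans := mx_edge_trans M_ge0 M_idem.
Let M_connect := connect_mx_edge M_ge0 M_idem.

Lemma limit_eq0 s t : ~ 0 < M s t -> M s t = 0.
Proof. by move=> /negP; rewrite lt_def M_ge0 andbT negbK => /eqP. Qed.

Lemma limit_rq0 : M r q = 0.
Proof. exact: (cvg_unique _ (@Mw_cvg r q) Pr_rq_cvg0). Qed.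

Lemma limit_rr_gt0 : 0 < M r r.
Proof. exact: recurrent_diag_gt0 M_ge0 (limit_sum1 Mw_cvg) M_idem r r_rec. Qed.

Lemma leak_states_neq : r != q.
Proof. by apply: contraTneq limit_rr_gt0 => {2}->; rewrite limit_rq0 ltxx. Qed.

(* [Dq] is the set of states that [M] reaches from [q] and [Cr] the recurrence
   class of [r]; [Lo] (resp. [Hi]) consists of the states that [M] sends
   surely outside (resp. inside) [Dq], and [Mid] of the others. *)
Definition Dq : {set Q} := [set t | (t == q) || (0 < M q t)].
Definition Cr : {set Q} := [set t | 0 < M r t].
Definition Lo : {set Q} := [set t | [forall d in Dq, M t d == 0]].
Definition Hi : {set Q} := [set t | [forall t' in ~: Dq, M t t' == 0]].
Definition Mid : {set Q} := ~: (Lo :|: Hi).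

Lemma q_in_Dq : q \in Dq.
Proof. by rewrite inE eqxx. Qed.

Lemma Dq_closed d t : d \in Dq -> 0 < M d t -> t \in Dq.
Proof.
rewrite !inE => /orP [/eqP -> Mqt|Mqd Mdt]; first by rewrite Mqt orbT.
by rewrite (M_trans Mqd Mdt) orbT.
Qed.

Lemma Lo_to_Dq t d : t \in Lo -> d \in Dq -> M t d = 0.
Proof. by rewrite inE => /forall_inP Lo_t /Lo_t /eqP. Qed.

Lemma Hi_to_nDq t t' : t \in Hi -> t' \notin Dq -> M t t' = 0.
Proof. by rewrite inE => /forall_inP Hi_t t'_nD; apply/eqP/Hi_t; rewrite inE. Qed.

Lemma Dq_sub_Hi d : d \in Dq -> d \in Hi.
Proof.
move=> d_in; rewrite inE; apply/forall_inP => t; rewrite inE => t_nD.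
by apply/eqP/limit_eq0; apply: contraNnot t_nD => /(Dq_closed d_in).
Qed.

Lemma r_in_Lo : r \in Lo.
Proof.
rewrite inE; apply/forall_inP => d d_in; apply/eqP/limit_eq0 => Mrd.
have [dq|Mdq] : d = q \/ 0 < M d q.
  move: d_in; rewrite inE => /orP [/eqP ->|Mqd]; first by left.
  exact: M_connect (q_rec (connect1 Mqd)).
- by move: Mrd; rewrite dq limit_rq0 ltxx.
- by move: (M_trans Mrd Mdq); rewrite limit_rq0 ltxx.
Qed.

Lemma Lo_notin_Hi t : t \in Lo -> t \notin Hi.
Proof.
move=> Lo_t; apply/negP => Hi_t.
have [t' Mtt'] : exists t', 0 < M t t'.
  by apply: sumr_gt0_exists; rewrite (limit_sum1 Mw_cvg) ltr01.
have [t'_in|t'_nin] := boolP (t' \in Dq).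
  by move: Mtt'; rewrite (Lo_to_Dq Lo_t t'_in) ltxx.
by move: Mtt'; rewrite (Hi_to_nDq Hi_t t'_nin) ltxx.
Qed.

Lemma LoHiMid_partition t :
  (t \in Lo)%:R + (t \in Hi)%:R + (t \in Mid)%:R = 1 :> R.
Proof.
rewrite finset.in_setC finset.in_setU; have [Lo_t|] := boolP (t \in Lo).
  by rewrite (negbTE (Lo_notin_Hi Lo_t)) /= !addr0.
by case: (t \in Hi); rewrite /= ?add0r ?addr0.
Qed.

Lemma Dq_notin_Mid d : d \in Dq -> d \notin Mid.
Proof. by move=> /Dq_sub_Hi Hi_d; rewrite finset.in_setC finset.in_setU Hi_d orbT. Qed.

Lemma nMid_to_Mid t t' : t \notin Mid -> t' \in Mid -> M t t' = 0.
Proof.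
rewrite !finset.in_setC !finset.in_setU negbK negb_or.
move=> /orP [Lo_t|Hi_t] /andP [t'_nLo t'_nHi].
  apply: limit_eq0 => Mtt'; move/negP: t'_nLo; apply; rewrite inE.
  apply/forall_inP => d d_in; apply/eqP/limit_eq0 => Mt'd.
  by move: (M_trans Mtt' Mt'd); rewrite (Lo_to_Dq Lo_t d_in) ltxx.
apply: (Hi_to_nDq Hi_t); apply: contraNN t'_nHi; exact: Dq_sub_Hi.
Qed.

Lemma Mid_to_Dq t : t \in Mid -> exists2 d, d \in Dq & 0 < M t d.
Proof.
rewrite finset.in_setC finset.in_setU negb_or => /andP [t_nLo _].
apply/exists_inP; apply: contraNT t_nLo; rewrite negb_exists_in => /forall_inP nM.
by rewrite inE; apply/forall_inP => d /nM; rewrite -leNgt => Mtd; rewrite eq_le Mtd M_ge0.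
Qed.

Lemma r_in_Cr : r \in Cr.
Proof. by rewrite inE limit_rr_gt0. Qed.

Lemma Cr_to_r t : t \in Cr -> 0 < M t r.
Proof.
rewrite inE => Mrt; have [->|//] := M_connect (r_rec (connect1 Mrt)).
exact: limit_rr_gt0.
Qed.

Lemma Cr_closed t t' : t \in Cr -> t' \notin Cr -> M t t' = 0.
Proof.
rewrite !inE => Mrt Mrt'_le; apply: limit_eq0 => Mtt'.
by move: Mrt'_le; rewrite (M_trans Mrt Mtt').
Qed.

Definition Cr_return := \big[Num.min/1]_(t in Cr) M t r / 2.
Definition Mid_exit :=
  \big[Num.min/1]_(p : Q * Q | [&& p.1 \in Mid, p.2 \in Dq & 0 < M p.1 p.2]) M p.1 p.2 / 2.

Lemma Cr_return_gt0 : 0 < Cr_return.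
Proof. by rewrite divr_gt0 // bigmin_gt0 // => t; apply: Cr_to_r. Qed.

Lemma Cr_return_le1 : Cr_return <= 1.
Proof.
by rewrite ler_pdivrMr // mul1r (le_trans (bigmin_le_id _ _ _ _)) // ler1n.
Qed.

Lemma Mid_exit_gt0 : 0 < Mid_exit.
Proof. by rewrite divr_gt0 // bigmin_gt0 // => p /and3P []. Qed.

Lemma Mid_exit_le1 : Mid_exit <= 1.
Proof.
by rewrite ler_pdivrMr // mul1r (le_trans (bigmin_le_id _ _ _ _)) // ler1n.
Qed.

Definition good_block (e : R) (v : seq A) :=
  [/\ forall t t', M t t' = 0 -> Mw aut v t t' <= e / #|Q|%:R,
      forall t, t \in Cr -> Cr_return <= Mw aut v t r &
      forall t d, [&& t \in Mid, d \in Dq & 0 < M t d] -> Mid_exit <= Mw aut v t d].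

Lemma good_block_eventually e : 0 < e -> \forall n \near \oo, good_block e (u n).
Proof.
move=> e_gt0; have N_gt0 : 0 < #|Q|%:R :> R by rewrite ltr0n; apply/card_gt0P; exists r.
have half_lt (x : R) : 0 < x -> x / 2 < x by move=> x_gt0; rewrite ltr_pdivrMr //; lra.
have null_ev : \forall n \near \oo, forall p : Q * Q,
    M p.1 p.2 = 0 -> Mw aut (u n) p.1 p.2 <= e / #|Q|%:R.
  apply: filter_forall => -[t t'].
  have [M0|M_neq0] := eqVneq (M t t') 0; last first.
    by apply: nearW => n /eqP; rewrite (negbTE M_neq0).
  have M_lt : M t t' < e / #|Q|%:R by rewrite M0 divr_gt0.
  by apply: filterS (cvgr_le _ (@Mw_cvg t t') _ M_lt) => n Mw_le _.
have Cr_ev : \forall n \near \oo, forall t, t \in Cr -> Cr_return <= Mw aut (u n) t r.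
  apply: filter_forall => t; have [t_in|_] := boolP (t \in Cr); last exact: nearW.
  have lt_M : Cr_return < M t r.
    apply: lt_le_trans (half_lt _ _) (bigmin_le_cond _ _ t_in).
    by rewrite bigmin_gt0 // => t'; apply: Cr_to_r.
  by apply: filterS (cvgr_ge _ (@Mw_cvg t r) _ lt_M) => n Mw_ge _.
have Mid_ev : \forall n \near \oo, forall p : Q * Q,
    [&& p.1 \in Mid, p.2 \in Dq & 0 < M p.1 p.2] -> Mid_exit <= Mw aut (u n) p.1 p.2.
  apply: filter_forall => p.
  have [p_in|_] := boolP [&& p.1 \in Mid, p.2 \in Dq & 0 < M p.1 p.2]; last exact: nearW.
  have lt_M : Mid_exit < M p.1 p.2.
    apply: lt_le_trans (half_lt _ _) (bigmin_le_cond _ (fun p : Q * Q => M p.1 p.2) p_in).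
    by rewrite bigmin_gt0 // => p' /and3P [].
  by apply: filterS (cvgr_ge _ (@Mw_cvg p.1 p.2) _ lt_M) => n Mw_ge _.
apply: filterS (filterI null_ev (filterI Cr_ev Mid_ev)) => n [null [Cr_n Mid_n]].
by split => [t t' /(null (t, t'))|//|t d /(Mid_n (t, d))].
Qed.

Lemma good_block_null_mass e v t (P : pred Q) : good_block e v -> 0 <= e ->
  (forall t', P t' -> M t t' = 0) -> \sum_(t' | P t') Mw aut v t t' <= e.
Proof. by case=> null _ _ e_ge0 M0; apply: sumr_le_card => // t' /M0 /null. Qed.

Lemma good_block_Cr_mass e v t : good_block e v -> 0 <= e -> t \in Cr ->
  1 - e <= \sum_(t' in Cr) Mw aut v t t'.
Proof.
move=> good e_ge0 t_in; rewrite Mw_sum_predC lerD2l lerN2.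
by apply: good_block_null_mass => // t'; apply: Cr_closed.
Qed.

Lemma good_block_Mid_mass e v t : good_block e v -> t \in Mid ->
  \sum_(t' in Mid) Mw aut v t t' <= 1 - Mid_exit.
Proof.
case=> _ _ exit t_in; have [d d_in Mtd] := Mid_to_Dq t_in.
rewrite Mw_sum_predC lerD2l lerN2; apply: le_trans (exit t d _) _.
  by rewrite t_in d_in Mtd.
apply: (ler_term_sum (P := fun t' => t' \notin Mid)) => [t' _|]; first exact: Mw_ge0.
exact: Dq_notin_Mid.
Qed.

Lemma good_block_nMid_mass e v t : good_block e v -> 0 <= e -> t \notin Mid ->
  \sum_(t' in Mid) Mw aut v t t' <= e.
Proof.
by move=> good e_ge0 t_nin; apply: good_block_null_mass => // t'; apply: nMid_to_Mid.
Qed.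

Lemma good_block_Lo_reach e v t : good_block e v -> 0 <= e -> t \in Lo ->
  reach aut Dq v 0 t <= e.
Proof.
move=> good e_ge0 t_in; rewrite /reach drop0.
by apply: good_block_null_mass => // d; apply: Lo_to_Dq.
Qed.

Lemma good_block_Hi_reach e v t : good_block e v -> 0 <= e -> t \in Hi ->
  1 - reach aut Dq v 0 t <= e.
Proof.
move=> good e_ge0 t_in; rewrite /reach drop0 Mw_sum_predC opprB addrC subrK.
by apply: good_block_null_mass => // t'; apply: Hi_to_nDq.
Qed.

Section GoodBlockStep.
Variables (x : Q -> R) (v : seq A) (alpha : R).
Hypotheses (x_ge0 : forall t, 0 <= x t) (x_sum1 : \sum_t x t = 1).

Lemma mass_le1 (P : pred Q) : \sum_(t | P t) x t <= 1.
Proof.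
by rewrite -x_sum1 [leRHS](bigID P) /= lerDl sumr_ge0.
Qed.

(* A good block with error [e] loses at most [e] of the mass of [Cr], while a
   fraction [Mid_exit] of the mass of [Mid] leaves [Mid]; for [e] of order
   [Mid_exit * alpha] both bounds improve by the factor [1 - Mid_exit / 2]. *)
Lemma good_block_invariant : 0 <= alpha ->
  good_block (Mid_exit / 4 * alpha) v ->
  1 / 2 + alpha / 2 <= \sum_(t in Cr) x t -> \sum_(t in Mid) x t <= alpha ->
  1 / 2 + (1 - Mid_exit / 2) * alpha / 2 <= \sum_(t in Cr) vMw aut x v t /\
  \sum_(t in Mid) vMw aut x v t <= (1 - Mid_exit / 2) * alpha.
Proof.
move=> alpha_ge0 good Cr_ge Mid_le.
have exit_gt0 := Mid_exit_gt0; have exit_le1 := Mid_exit_le1.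
have e_ge0 : 0 <= Mid_exit / 4 * alpha by rewrite mulr_ge0 // divr_ge0 // ltW.
rewrite !sum_vMw_pred; split.
  have Cr_mass : \sum_(t in Cr) x t * (1 - Mid_exit / 4 * alpha) <=
      \sum_s x s * \sum_(t in Cr) Mw aut v s t.
    rewrite [leRHS](bigID (mem Cr)) /= -[leLHS]addr0 lerD //.
      by apply: ler_sum => s s_in; rewrite ler_wpM2l // good_block_Cr_mass.
    by apply: sumr_ge0 => s _; rewrite mulr_ge0 // sumr_ge0 // => t _; apply: Mw_ge0.
  apply: le_trans Cr_mass; rewrite -mulr_suml.
  have := mass_le1 (mem Cr); nra.
rewrite (bigID (mem Mid)) /=.
have Mid_part : \sum_(s in Mid) x s * \sum_(t in Mid) Mw aut v s t <=
    (\sum_(s in Mid) x s) * (1 - Mid_exit).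
  rewrite mulr_suml; apply: ler_sum => s s_in.
  by rewrite ler_wpM2l // (good_block_Mid_mass good).
have nMid_part : \sum_(s | s \notin Mid) x s * \sum_(t in Mid) Mw aut v s t <=
    Mid_exit / 4 * alpha.
  apply: le_trans (_ : _ <= \sum_(s | s \notin Mid) x s * (Mid_exit / 4 * alpha)) _.
    by apply: ler_sum => s s_nin; rewrite ler_wpM2l // good_block_nMid_mass.
  by rewrite -mulr_suml ler_piMl // mass_le1.
have Mid_ge0 : 0 <= \sum_(t in Mid) x t by apply: sumr_ge0.
nra.
Qed.

Lemma good_block_return e : good_block e v -> 1 / 2 <= \sum_(t in Cr) x t ->
  Cr_return / 2 <= vMw aut x v r.
Proof.
case=> _ return_r _ Cr_ge; have return_gt0 := Cr_return_gt0.
apply: le_trans (_ : _ <= \sum_(t in Cr) x t * Mw aut v t r) _.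
  apply: le_trans (_ : _ <= \sum_(t in Cr) x t * Cr_return) _; last first.
    by apply: ler_sum => t t_in; rewrite ler_wpM2l // return_r.
  by rewrite -mulr_suml; nra.
rewrite [leRHS](bigID (mem Cr)) /= lerDl.
by apply: sumr_ge0 => t _; rewrite mulr_ge0 ?Mw_ge0.
Qed.

End GoodBlockStep.

Hypothesis Pr_rq_gt0 : forall n, 0 < Pr aut r (u n) q.

Lemma leak_block_neq0 n : (0 < size (u n))%N.
Proof.
have := Pr_rq_gt0 n; rewrite /Pr; case: (u n) => // /=.
by rewrite /qmx_id (negbTE leak_states_neq) ltxx.
Qed.

Definition mid_decay := 1 - Mid_exit / 2.

Definition block_error j := Mid_exit / 4 * mid_decay ^+ j.

Lemma mid_decay_ge0 : 0 <= mid_decay.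
Proof. by have := Mid_exit_le1; rewrite /mid_decay; lra. Qed.

Lemma mid_decay_norm_lt1 : `|mid_decay| < 1.
Proof.
by rewrite ger0_norm ?mid_decay_ge0 // /mid_decay gtrBl divr_gt0 ?Mid_exit_gt0.
Qed.

Lemma block_error_gt0 j : 0 < block_error j.
Proof.
have exit_gt0 := Mid_exit_gt0; have exit_le1 := Mid_exit_le1.
apply: mulr_gt0; first by rewrite divr_gt0.
by apply: exprn_gt0; rewrite /mid_decay; lra.
Qed.

Lemma block_error_le j : block_error j <= mid_decay ^+ j.
Proof.
have exit_le1 := Mid_exit_le1; have := exprn_ge0 j mid_decay_ge0.
by rewrite /block_error; nra.
Qed.

Section GoodBlocks.
Variables (f : nat -> nat) (a0 : A).
Hypothesis f_good : forall j, good_block (block_error j) (u (f j)).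

Let v j := u (f j).
Let v_neq0 j : (0 < size (v j))%N := leak_block_neq0 (f j).

Definition block_word := concat_word a0 v.

Definition block_dist j t := Pr aut r (concat_prefix v j) t.

Lemma block_distS j t : block_dist j.+1 t = vMw aut (block_dist j) (v j) t.
Proof. by rewrite /block_dist /Pr concat_prefixS Mw_cat. Qed.

Lemma block_dist_ge0 j t : 0 <= block_dist j t.
Proof. exact: Mw_ge0. Qed.

Lemma block_dist_sum1 j : \sum_t block_dist j t = 1.
Proof. exact: Mw_sum1. Qed.

Lemma block_dist_invariant j :
  1 / 2 + mid_decay ^+ j / 2 <= \sum_(t in Cr) block_dist j t /\
  \sum_(t in Mid) block_dist j t <= mid_decay ^+ j.
Proof.
elim: j => [|j [Cr_ge Mid_le]].
  rewrite /block_dist /Pr !sum_Mw_nil_set r_in_Cr finset.in_setC finset.in_setU r_in_Lo.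
  by rewrite expr0 /=; split; lra.
have step (S : {set Q}) :
    \sum_(t in S) block_dist j.+1 t = \sum_(t in S) vMw aut (block_dist j) (v j) t.
  by apply: eq_bigr => t _; apply: block_distS.
rewrite !step exprS; apply: good_block_invariant => //.
- exact: block_dist_ge0.
- exact: block_dist_sum1.
- exact: exprn_ge0 mid_decay_ge0.
- exact: f_good.
Qed.

Lemma block_dist_r j : Cr_return / 2 <= block_dist j r.
Proof.
case: j => [|j]; last first.
  rewrite block_distS; apply: good_block_return (f_good j) _ => //.
  - exact: block_dist_ge0.
  - have [Cr_ge _] := block_dist_invariant j.
    by apply: le_trans Cr_ge; rewrite lerDl divr_ge0 // exprn_ge0 // mid_decay_ge0.
rewrite /block_dist /Pr /= /qmx_id eqxx /=.
by have := Cr_return_le1; lra.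
Qed.

Lemma Pr_block_word j i s : (i <= size (v j))%N ->
  Pr aut r (Defs.prefix block_word (size (concat_prefix v j) + i)) s =
  vMw aut (block_dist j) (take i (v j)) s.
Proof. by move=> i_le; rewrite /Pr /Defs.prefix mkseq_concat_word_block // Mw_cat. Qed.

Lemma block_intermediate_prob j theta :
  0 < theta -> theta < Cr_return / 2 ->
  block_error j <= min_trans aut * theta / #|Q|%:R / 2 ->
  exists n s, (j <= n)%N /\
    min_trans aut * theta / #|Q|%:R < Pr aut r (Defs.prefix block_word n) s <=
      theta + 3 * mid_decay ^+ j.
Proof.
move=> theta_gt0 theta_lt err_le.
have e_ge0 := ltW (block_error_gt0 j).
pose part (S : {set Q}) t := block_dist j t * (t \in S)%:R.
have part_ge0 (S : {set Q}) t : 0 <= part S t by rewrite mulr_ge0 ?block_dist_ge0.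
have part_le (S : {set Q}) (g : Q -> R) : (forall t, 0 <= g t) ->
    (forall t, t \in S -> g t <= block_error j) -> \sum_t part S t * g t <= block_error j.
  move=> g_ge0 g_le; apply: le_trans (_ : _ <= \sum_t block_dist j t * block_error j) _.
    apply: ler_sum => t _; rewrite /part -mulrA ler_wpM2l ?block_dist_ge0 //.
    by case: (boolP (t \in S)) => [/g_le|_]; rewrite ?mul1r ?mul0r.
  by rewrite -mulr_suml block_dist_sum1 mul1r.
have reach_r : 0 < reach aut Dq (v j) 0 r.
  apply: lt_le_trans (Pr_rq_gt0 (f j)) _; rewrite /reach drop0.
  by apply: (ler_term_sum _ q_in_Dq) => t _; apply: Mw_ge0.
have start : theta < \sum_t part Lo t * (0 < reach aut Dq (v j) 0 t)%R%:R.
  apply: lt_le_trans (lt_le_trans theta_lt (block_dist_r j)) _.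
  apply: le_trans (ler_term_sum (P := xpredT) (j := r) _ isT) => [|t _].
    by rewrite /part r_in_Lo reach_r !mulr1.
  by rewrite mulr_ge0.
have lo_end := part_le Lo _ (reach_ge0 aut Dq (v j) 0)
  (fun t => good_block_Lo_reach (f_good j) e_ge0).
have [i [s [i_le Pr_bounds]]] := exists_intermediate_vMw (@min_trans_le _ _ _ aut)
  (min_trans_gt0 aut) (min_trans_le1 aut) (part_ge0 Lo) (part_ge0 Hi) (part_ge0 Mid)
  theta_gt0 start (le_trans lo_end err_le).
have part_sum : (fun t => part Lo t + part Hi t + part Mid t) = block_dist j.
  by apply: funext => t; rewrite /part -!mulrDr LoHiMid_partition mulr1.
exists (size (concat_prefix v j) + i), s; split.
  exact: leq_trans (size_concat_prefix v_neq0 j) (leq_addr _ _).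
rewrite Pr_block_word // -part_sum; apply/andP; split; first by case/andP: Pr_bounds.
apply: le_trans (andP Pr_bounds).2 _.
have hi_le : \sum_t part Hi t * (1 - reach aut Dq (v j) 0 t) <= block_error j.
  apply: part_le => [t|t]; first by rewrite subr_ge0 reach_le1.
  exact: good_block_Hi_reach (f_good j) e_ge0.
have mid_le : \sum_t part Mid t <= mid_decay ^+ j.
  by rewrite sumr_mul_indicator; case: (block_dist_invariant j).
by have := block_error_le j; lra.
Qed.

End GoodBlocks.

Lemma leak_not_simple : ~ simple_pa aut.
Proof.
move=> simple.
have [f f_good] := choice (fun j => filter_ex (good_block_eventually (block_error_gt0 j))).
have [a0 _] : exists a0 : A, True by case: (u 0%N) (leak_block_neq0 0) => // a; exists a.
have [lam lam_gt0 dich] := simple_process_dichotomy (simple (block_word f a0) r).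
pose theta := Num.min lam (Cr_return / 2) / 4.
have return_gt0 := Cr_return_gt0.
have theta_gt0 : 0 < theta by rewrite divr_gt0 // lt_min lam_gt0 divr_gt0.
have min_lam : Num.min lam (Cr_return / 2) <= lam by rewrite ge_min lexx.
have min_ret : Num.min lam (Cr_return / 2) <= Cr_return / 2 by rewrite ge_min lexx orbT.
have theta_lam : theta <= lam / 4 by rewrite /theta; lra.
have theta_lt : theta < Cr_return / 2 by rewrite /theta; lra.
pose kappa := min_trans aut * theta / #|Q|%:R.
have N_gt0 : 0 < #|Q|%:R :> R by rewrite ltr0n; apply/card_gt0P; exists r.
have kappa_gt0 : 0 < kappa by rewrite divr_gt0 // mulr_gt0 // min_trans_gt0.
have [N N_dich] := dich kappa kappa_gt0.
have decay_small z : 0 < z -> \forall j \near \oo, mid_decay ^+ j < z.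
  by apply: cvgr_lt; apply: cvg_expr mid_decay_norm_lt1.
have lam8_gt0 : 0 < lam / 8 by rewrite divr_gt0.
have kappa2_gt0 : 0 < kappa / 2 by rewrite divr_gt0.
have [j [[N_le small_lam] small_kappa]] := filter_ex
  (filterI (filterI (nbhs_infty_ge N) (decay_small _ lam8_gt0)) (decay_small _ kappa2_gt0)).
have err_le : block_error j <= kappa / 2 by apply: le_trans (block_error_le j) (ltW small_kappa).
have [n [s [j_le /andP [Pr_gt Pr_le]]]] :=
  block_intermediate_prob a0 f_good theta_gt0 theta_lt err_le.
rewrite -/kappa in Pr_gt.
by case: (N_dich n s (leq_trans N_le j_le)); lra.
Qed.

End LeakLimit.

Theorem theorem5p9 (A Q : finType) (R : realType) (aut : pa A Q R) :
  simple_pa aut -> leaktight aut.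
Proof.
move=> simple u [_ [M [Mw_cvg [M_idem [r [q [r_rec [q_rec [Pr_cvg0 Pr_gt0]]]]]]]]].
exact: (leak_not_simple Mw_cvg M_idem r_rec q_rec Pr_cvg0 Pr_gt0 simple).
Qed.
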